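(* For every compactum $X$ and every $\mathcal A\in M_\cup(M_\cup X)$ (regarded as an element of $M(MX)$), the capacity $\mu^\bullet X(\mathcal A)$ is a possibility capacity, i.e. $\mu^\bullet X(M_\cup(M_\cup X))\subset M_\cup X$. Explicitly, for all closed $B,C\subset X$, $\mu^\bullet X(\mathcal A)(B\cup C)=\max\{\mu^\bullet X(\mathcal A)(B),\mu^\bullet X(\mathcal A)(C)\}$.
   Context: A compactum is a compact Hausdorff space; $I=[0,1]$; $\mathcal F(X)$ denotes the family of closed subsets of $X$. An (upper-semicontinuous) capacity on a compactum $X$ is a function $\nu:\mathcal F(X)\to I$ such that: (1) $\nu(X)=1$, $\nu(\emptyset)=0$; (2) if $F\subset G$ then $\nu(F)\le\nu(G)$; (3) if $\nu(F)<a$ then there is an open set $O\supset F$ with $\nu(B)<a$ for every closed $B\subset O$. For open $U\subset X$ one puts $\nu(U)=\sup\{\nu(K): K\text{ closed},\ K\subset U\}$. $MX$ is the set of all capacities on $X$, topologized by the subbase consisting of the sets $\{c\in MX: c(F)<a\}$ ($F$ closed, $a\in I$) and $\{c\in MX: c(U)>a\}$ ($U$ open, $a\in I$); it is a compactum. A capacity $\nu$ is a possibility capacity if $\nu(A\cup B)=\max\{\nu(A),\nu(B)\}$ for all closed $A,B$; $M_\cup X$ denotes the (closed) subspace of $MX$ of possibility capacities. A capacity $\mathcal A$ on the compactum $M_\cup X$ is regarded as a capacity on $MX$ via $\mathcal A(\Phi)=\mathcal A(\Phi\cap M_\cup X)$ for closed $\Phi\subset MX$; in this way $M_\cup(M_\cup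 X)\subset M(MX)$. For a closed $F\subset X$ and $t\in I$ put $F_t=\{c\in MX: c(F)\ge t\}$. The map $\mu^\bullet X: M(MX)\to MX$ is defined by $\mu^\bullet X(\mathcal C)(F)=\max\{\mathcal C(F_t)\cdot t: t\in(0,1]\}$ (the maximum exists). *)

From Stdlib Require Import Reals List ClassicalEpsilon.
Open Scope R_scope.

Definition set (T : Type) := T -> Prop.
Definition setT {T} : set T := fun _ => True.
Definition set0 {T} : set T := fun _ => False.
Definition setC {T} (A : set T) : set T := fun x => ~ A x.
Definition setU {T} (A B : set T) : set T := fun x => A x \/ B x.
Definition setI {T} (A B : set T) : set T := fun x => A x /\ B x.
Definition subset {T} (A B : set T) := forall x, A x -> B x.
Definition bigU {T} (F : set (set T)) : set T := fun x => exists U, F U /\ U x.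

Definition is_topology {T} (op : set (set T)) : Prop :=
  op setT /\
  (forall U V, op U -> op V -> op (setI U V)) /\
  (forall F : set (set T), (forall U, F U -> op U) -> op (bigU F)).

Definition closed {T} (op : set (set T)) (F : set T) : Prop := op (setC F).

Definition hausdorff {T} (op : set (set T)) : Prop :=
  forall x y, x <> y -> exists U V, op U /\ op V /\ U x /\ V y /\
    (forall z, ~ (U z /\ V z)).

Definition compact {T} (op : set (set T)) : Prop :=
  forall F : set (set T), (forall U, F U -> op U) ->
    (forall x, exists U, F U /\ U x) ->
    exists l : list (set T), (forall U, In U l -> F U) /\
      (forall x, exists U, In U l /\ U x).

Definition compactum {T} (op : set (set T)) : Prop :=
  is_topology op /\ hausdorff op /\ compact op.

Inductive gen_open {T} (S : set (set T)) : set (set T) :=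
| go_sub : forall U, S U -> gen_open S U
| go_full : gen_open S setT
| go_inter : forall U V, gen_open S U -> gen_open S V -> gen_open S (setI U V)
| go_union : forall F : set (set T), (forall U, F U -> gen_open S U) ->
    gen_open S (bigU F).

Definition sub_open {T} (op : set (set T)) (P : T -> Prop) : set (set {x | P x}) :=
  fun W => exists U, op U /\ forall y : {x | P x}, W y <-> U (proj1_sig y).

(* Supremum of a set of reals (chosen least upper bound; the sets below are
   nonempty and bounded, so this is the genuine supremum). *)
Definition Rsup (S : R -> Prop) : R :=
  epsilon (inhabits 0) (fun m => is_lub S m).

(* Upper-semicontinuous capacity: a function on closed sets (values on
   non-closed sets are irrelevant). *)
Definition is_capacity {T} (op : set (set T)) (nu : set T -> R) : Prop :=
  nu setT = 1 /\ nu set0 = 0 /\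
  (forall F, closed op F -> 0 <= nu F <= 1) /\
  (forall F G, closed op F -> closed op G -> subset F G -> nu F <= nu G) /\
  (forall F a, closed op F -> nu F < a ->
     exists O, op O /\ subset F O /\
       forall B, closed op B -> subset B O -> nu B < a).

Definition cap_open {T} (op : set (set T)) (nu : set T -> R) (U : set T) : R :=
  Rsup (fun s => exists K, closed op K /\ subset K U /\ s = nu K).

Definition MX {T} (op : set (set T)) := {nu : set T -> R | is_capacity op nu}.

Definition MX_subbase {T} (op : set (set T)) : set (set (MX op)) :=
  fun W =>
    (exists F a, closed op F /\ W = (fun c : MX op => proj1_sig c F < a)) \/
    (exists U a, op U /\ W = (fun c : MX op => cap_open op (proj1_sig c) U > a)).

Definition MX_open {T} (op : set (set T)) : set (set (MX op)) :=
  gen_open (MX_subbase op).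

Definition possibility {T} (op : set (set T)) (nu : set T -> R) : Prop :=
  forall A B, closed op A -> closed op B -> nu (setU A B) = Rmax (nu A) (nu B).

Definition is_poss {T} (op : set (set T)) (c : MX op) : Prop :=
  possibility op (proj1_sig c).

Definition MuX {T} (op : set (set T)) := {c : MX op | is_poss op c}.
Definition MuX_open {T} (op : set (set T)) : set (set (MuX op)) :=
  sub_open (MX_open op) (is_poss op).

Definition Ft {T} (op : set (set T)) (F : set T) (t : R) : set (MX op) :=
  fun c => proj1_sig c F >= t.

(* mu^bullet X (A)(F) = max { A(F_t) * t : t in (0,1] }, where A, a capacity on
   M_cup X, is evaluated on F_t via A(F_t /\ M_cup X). *)
Definition mu_bullet {T} (op : set (set T)) (A : set (MuX op) -> R) (F : set T) : R :=
  Rsup (fun r => exists t, 0 < t <= 1 /\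
          r = A (fun c : MuX op => Ft op F t (proj1_sig c)) * t).

From Stdlib Require Import Reals Lra ClassicalEpsilon FunctionalExtensionality PropExtensionality.
Open Scope R_scope.

(* Fix closed sets B, C and a level t.  Every possibility
   capacity c satisfies c(B u C) = max(c B, c C), so c(B u C) >= t iff
   c B >= t or c C >= t: inside M_cup X the set (B u C)_t is the union of
   B_t and C_t.  These sets are closed in M_cup X (their complements are
   subbasic open sets), so the possibility capacity A splits the value:
   A((B u C)_t) * t = max(A(B_t) * t, A(C_t) * t) for every t in (0,1].
   It remains to take suprema over t: the supremum of a pointwise maximum
   of two bounded families is the maximum of their suprema.
   The file first collects the facts about suprema, then the facts about
   the sets F_t, and finally derives the theorem. *)

Definition image_on {I : Type} (P : I -> Prop) (f : I -> R) : R -> Prop :=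
  fun r => exists i, P i /\ r = f i.

Lemma Rsup_is_lub (S : R -> Prop) : bound S -> (exists x, S x) -> is_lub S (Rsup S).
Proof.
  intros Hb He. unfold Rsup. apply epsilon_spec.
  destruct (completeness S Hb He) as [m Hm]. now exists m.
Qed.

Lemma Rsup_eq (S : R -> Prop) (m : R) : (exists x, S x) -> is_lub S m -> Rsup S = m.
Proof.
  intros He Hm.
  assert (HS : is_lub S (Rsup S)) by (apply Rsup_is_lub; [exists m; apply Hm | exact He]).
  destruct HS as [Hup Hmin], Hm as [Hup' Hmin'].
  apply Rle_antisym; auto.
Qed.

Lemma Rsup_image_max (I : Type) (P : I -> Prop) (f g h : I -> R) (M : R) :
  (exists i, P i) ->
  (forall i, P i -> f i <= M) -> (forall i, P i -> g i <= M) ->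
  (forall i, P i -> h i = Rmax (f i) (g i)) ->
  Rsup (image_on P h) = Rmax (Rsup (image_on P f)) (Rsup (image_on P g)).
Proof.
  intros [i0 Hi0] HfM HgM Hh.
  assert (Hlub : forall k : I -> R, (forall i, P i -> k i <= M) ->
            is_lub (image_on P k) (Rsup (image_on P k))).
  { intros k HkM. apply Rsup_is_lub.
    - exists M. intros r [i [Hi ->]]. auto.
    - exists (k i0), i0. auto. }
  destruct (Hlub f HfM) as [Uf Mf], (Hlub g HgM) as [Ug Mg].
  apply Rsup_eq; [exists (h i0), i0; auto | split].
  - intros r [i [Hi ->]]. rewrite (Hh i Hi). apply Rmax_lub.
    + eapply Rle_trans; [apply Uf; now exists i | apply Rmax_l].
    + eapply Rle_trans; [apply Ug; now exists i | apply Rmax_r].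
  - intros b Hb. apply Rmax_lub.
    + apply Mf. intros r [i [Hi ->]]. eapply Rle_trans; [apply Rmax_l|].
      rewrite <- (Hh i Hi). apply Hb. now exists i.
    + apply Mg. intros r [i [Hi ->]]. eapply Rle_trans; [apply Rmax_r|].
      rewrite <- (Hh i Hi). apply Hb. now exists i.
Qed.

Section LevelSets.
Variables (T : Type) (op : set (set T)).

Definition Ft_poss (F : set T) (t : R) : set (MuX op) :=
  fun c => Ft op F t (proj1_sig c).

(* F_t is closed in M_cup X: its complement is the trace of the subbasic
   open set {c : c(F) < t}. *)
Lemma Ft_poss_closed (F : set T) (t : R) :
  closed op F -> closed (MuX_open op) (Ft_poss F t).
Proof.
  intros HF. exists (fun c : MX op => proj1_sig c F < t). split.
  - apply go_sub. left. now exists F, t.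
  - intros y. unfold setC, Ft_poss, Ft. lra.
Qed.

Lemma Ft_poss_union (B C : set T) (t : R) :
  closed op B -> closed op C ->
  Ft_poss (setU B C) t = setU (Ft_poss B t) (Ft_poss C t).
Proof.
  intros HB HC. apply functional_extensionality. intros [c Hc].
  apply propositional_extensionality. unfold Ft_poss, Ft, setU; simpl.
  change (fun x : T => B x \/ C x) with (setU B C).
  rewrite (Hc B C HB HC). unfold Rmax.
  destruct (Rle_dec _ _); split; intros H; try destruct H; lra.
Qed.

End LevelSets.

Theorem lemma1 (T : Type) (op : set (set T)) (hX : compactum op)
  (A : set (MuX op) -> R)
  (hA : is_capacity (MuX_open op) A) (hAposs : possibility (MuX_open op) A)
  (B C : set T) (hB : closed op B) (hC : closed op C) :
  mu_bullet op A (setU B C) = Rmax (mu_bullet op A B) (mu_bullet op A C).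
Proof.
  destruct hA as [_ [_ [Hrange _]]].
  set (level := fun t : R => 0 < t <= 1).
  set (weighted := fun F t => A (Ft_poss T op F t) * t).
  change (Rsup (image_on level (weighted (setU B C))) =
          Rmax (Rsup (image_on level (weighted B))) (Rsup (image_on level (weighted C)))).
  assert (Hbound : forall F, closed op F -> forall t, level t -> weighted F t <= 1).
  { intros F HF t Ht. pose proof (Hrange _ (Ft_poss_closed T op F t HF)).
    unfold level, weighted in *. nra. }
  apply Rsup_image_max with (M := 1).
  - exists 1. unfold level. lra.
  - now apply Hbound.
  - now apply Hbound.
  - intros t Ht. unfold weighted.
    rewrite (Ft_poss_union T op B C t hB hC),
            (hAposs _ _ (Ft_poss_closed T op B t hB) (Ft_poss_closed T op C t hC)).
    rewrite !(Rmult_comm _ t). apply eq_sym, RmaxRmult. unfold level in Ht. lra.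
Qed.
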